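(* Fix $I_{ij},I_{jk},I_{ki}\in[0,\infty)$. Let $\mathcal{U}_E^{ijk}$ be the set of $(u_i,u_j,u_k)\in\mathbb{R}^3$ such that $(e^{u_i},e^{u_j},e^{u_k})\in\mathcal{R}_E^{ijk}$. Then $\mathcal{U}_E^{ijk}$ is a connected and simply connected open subset of $\mathbb{R}^3$.
   Context: The set $\mathcal{R}_E^{ijk}$ consists of those $(r_i,r_j,r_k)\in\mathbb{R}^3_{>0}$ for which $$l_{ij}=\sqrt{r_i^2+r_j^2+2I_{ij}r_ir_j},\quad l_{jk}=\sqrt{r_j^2+r_k^2+2I_{jk}r_jr_k},\quad l_{ki}=\sqrt{r_k^2+r_i^2+2I_{ki}r_kr_i}$$ satisfy the strict triangle inequalities. *)

From Stdlib Require Import Reals.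
Open Scope R_scope.

Definition pt3 : Type := (R * R * R)%type.

Definition dist3 (p q : pt3) : R :=
  let '(x1, y1, z1) := p in let '(x2, y2, z2) := q in
  sqrt ((x1 - x2) ^ 2 + (y1 - y2) ^ 2 + (z1 - z2) ^ 2).

Definition open3 (U : pt3 -> Prop) : Prop :=
  forall p, U p -> exists eps, 0 < eps /\ forall q, dist3 p q < eps -> U q.

Definition connected3 (U : pt3 -> Prop) : Prop :=
  ~ (exists A B : pt3 -> Prop,
        open3 A /\ open3 B /\
        (forall p, U p -> A p \/ B p) /\
        (exists p, U p /\ A p) /\ (exists p, U p /\ B p) /\
        (forall p, U p -> A p -> B p -> False)).

Definition I01 (t : R) : Prop := 0 <= t <= 1.

Definition path_cont (g : R -> pt3) : Prop :=
  forall t, I01 t -> forall eps, 0 < eps -> exists delta, 0 < delta /\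
    forall t', I01 t' -> Rabs (t - t') < delta -> dist3 (g t) (g t') < eps.

Definition square_cont (H : R -> R -> pt3) : Prop :=
  forall s t, I01 s -> I01 t -> forall eps, 0 < eps -> exists delta, 0 < delta /\
    forall s' t', I01 s' -> I01 t' ->
      sqrt ((s - s') ^ 2 + (t - t') ^ 2) < delta ->
      dist3 (H s t) (H s' t') < eps.

Definition path_connected3 (U : pt3 -> Prop) : Prop :=
  forall p q, U p -> U q -> exists g : R -> pt3,
    path_cont g /\ (forall t, I01 t -> U (g t)) /\ g 0 = p /\ g 1 = q.

Definition simply_connected3 (U : pt3 -> Prop) : Prop :=
  path_connected3 U /\
  forall g : R -> pt3,
    path_cont g -> (forall t, I01 t -> U (g t)) -> g 0 = g 1 ->
    exists H : R -> R -> pt3,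
      square_cont H /\
      (forall s t, I01 s -> I01 t -> U (H s t)) /\
      (forall t, I01 t -> H 0 t = g t) /\
      (forall t, I01 t -> H 1 t = g 0) /\
      (forall s, I01 s -> H s 0 = g 0 /\ H s 1 = g 0).

Definition edge_len (Iab ra rb : R) : R :=
  sqrt (ra ^ 2 + rb ^ 2 + 2 * Iab * ra * rb).

Definition R_E (Iij Ijk Iki : R) (r : pt3) : Prop :=
  let '(ri, rj, rk) := r in
  0 < ri /\ 0 < rj /\ 0 < rk /\
  let lij := edge_len Iij ri rj in
  let ljk := edge_len Ijk rj rk in
  let lki := edge_len Iki rk ri in
  lij < ljk + lki /\ ljk < lki + lij /\ lki < lij + ljk.

Definition U_E (Iij Ijk Iki : R) (u : pt3) : Prop :=
  let '(ui, uj, uk) := u in R_E Iij Ijk Iki (exp ui, exp uj, exp uk).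

From Stdlib Require Import Reals Lra Psatz Classical.
Open Scope R_scope.

(* Proof idea: pass to curvatures k = e^{-u} = 1/r.  Multiplying the triangle
   inequalities by k_i k_j k_k turns U_E into the set of positive (a,b,c) with
   c N_ij(a,b) < a N_jk(b,c) + b N_ki(c,a) and its rotations, where
   N_I(x,y) = sqrt(x^2 + y^2 + 2 I x y).  The core of the file shows that this
   set is CONVEX.  By Heron's formula it is {heron > 0} for a quadratic form
   [heron]; for I_ij <= 1 the inequality with c on the left is automatic, and
   for I_ij > 1 completing the square in c shows that it holds on the
   admissible set exactly below the graph of beta + sqrt(disc) N_ij, which is
   concave because N_I is concave for I >= 1 (reverse Cauchy-Schwarz).
   Segments of curvatures give paths u(s) = -ln((1-s) e^{-p} + s e^{-q}) in
   U_E: they connect any two points and contract any loop to its base point.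
   Openness follows from continuity of the edge lengths, and connectedness
   from path-connectedness. *)

(* The quadratic form x^2 + y^2 + 2 I x y and its square root; with radii
   replaced by curvatures, [qnorm I a b / (a b)] is the edge length. *)
Definition qform (I x y : R) : R := x ^ 2 + y ^ 2 + 2 * I * x * y.
Definition qnorm (I x y : R) : R := sqrt (qform I x y).

Lemma qform_sym I x y : qform I x y = qform I y x.
Proof. unfold qform; ring. Qed.

Lemma qnorm_sym I x y : qnorm I x y = qnorm I y x.
Proof. unfold qnorm; rewrite qform_sym; reflexivity. Qed.

Lemma qform_nonneg I x y : 0 <= I -> 0 <= x -> 0 <= y -> 0 <= qform I x y.
Proof.
  intros hI hx hy; unfold qform.
  assert (0 <= I * x * y) by (repeat apply Rmult_le_pos; lra). nra.
Qed.

Lemma qnorm_nonneg I x y : 0 <= qnorm I x y.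
Proof. apply sqrt_pos. Qed.

Lemma qnorm_sq I x y : 0 <= I -> 0 <= x -> 0 <= y -> qnorm I x y * qnorm I x y = qform I x y.
Proof. intros; apply sqrt_sqrt, qform_nonneg; assumption. Qed.

Lemma le_sqrt_of_sq x y : 0 <= x -> x * x <= y -> x <= sqrt y.
Proof.
  intros hx hxy. rewrite <- (sqrt_square x hx). apply sqrt_le_1_alt; exact hxy.
Qed.

Lemma qnorm_gt I x y : 0 <= I -> 0 < x -> 0 <= y -> y < qnorm I x y.
Proof.
  intros hI hx hy.
  assert (0 <= I * x * y) by (repeat apply Rmult_le_pos; lra).
  rewrite <- (sqrt_square y hy) at 1. unfold qnorm. apply sqrt_lt_1_alt.
  unfold qform; split; nra.
Qed.

Lemma qnorm_le_sum I x y : I <= 1 -> 0 <= x -> 0 <= y -> qnorm I x y <= x + y.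
Proof.
  intros hI hx hy. rewrite <- (sqrt_square (x + y)) by lra.
  unfold qnorm. apply sqrt_le_1_alt. unfold qform.
  assert (I * x * y <= x * y) by (apply Rmult_le_compat_r; nra). nra.
Qed.

(* For I >= 1 the form is Lorentzian, and the reverse Cauchy-Schwarz
   inequality q(v) q(w) <= B(v,w)^2 makes its norm concave on the quadrant. *)
Lemma qnorm_concave I a b a' b' t :
  1 <= I -> 0 <= a -> 0 <= b -> 0 <= a' -> 0 <= b' -> 0 <= t <= 1 ->
  (1 - t) * qnorm I a b + t * qnorm I a' b'
  <= qnorm I ((1 - t) * a + t * a') ((1 - t) * b + t * b').
Proof.
  intros hI ha hb ha' hb' ht.
  set (n := qnorm I a b); set (n' := qnorm I a' b').
  assert (en : n * n = qform I a b) by (apply qnorm_sq; lra).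
  assert (en' : n' * n' = qform I a' b') by (apply qnorm_sq; lra).
  assert (hn : 0 <= n) by apply qnorm_nonneg.
  assert (hn' : 0 <= n') by apply qnorm_nonneg.
  set (B := a * a' + b * b' + I * (a * b' + a' * b)).
  assert (hB : 0 <= B) by (unfold B; assert (0 <= a * b' + a' * b) by nra; nra).
  assert (reverse_CS : n * n' <= B).
  { assert (B * B - (n * n) * (n' * n') = (I ^ 2 - 1) * (a * b' - a' * b) ^ 2)
      by (rewrite en, en'; unfold B, qform; ring).
    assert (0 <= (I ^ 2 - 1) * (a * b' - a' * b) ^ 2)
      by (apply Rmult_le_pos; [nra | apply pow2_ge_0]).
    nra. }
  apply le_sqrt_of_sq; [nra |].
  replace (qform I ((1 - t) * a + t * a') ((1 - t) * b + t * b'))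
    with ((1 - t) ^ 2 * (n * n) + t ^ 2 * (n' * n') + 2 * t * (1 - t) * B)
    by (rewrite en, en'; unfold B, qform; ring).
  assert (0 <= 2 * t * (1 - t)) by nra.
  nra.
Qed.

Lemma triangle_iff_heron x y z : 0 <= x -> 0 <= y -> 0 <= z ->
  (x < y + z /\ y < z + x /\ z < x + y) <->
  (x ^ 2 - (y + z) ^ 2) * (x ^ 2 - (y - z) ^ 2) < 0.
Proof.
  intros hx hy hz; split.
  - intros [h1 [h2 h3]].
    assert (x ^ 2 - (y + z) ^ 2 < 0) by nra.
    assert (0 < x ^ 2 - (y - z) ^ 2) by nra.
    nra.
  - intros hP.
    assert (h1 : x < y + z).
    { destruct (Rlt_or_le x (y + z)) as [h | h]; [exact h |].
      assert (0 <= x ^ 2 - (y + z) ^ 2) by nra.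
      assert (0 <= x ^ 2 - (y - z) ^ 2) by nra. nra. }
    assert (x ^ 2 - (y + z) ^ 2 < 0) by nra.
    assert (0 < x ^ 2 - (y - z) ^ 2) by nra.
    split; [exact h1 | split; nra].
Qed.

(* The triangle inequality l_ij < l_jk + l_ki written in curvature
   coordinates (a,b,c) = (1/r_i, 1/r_j, 1/r_k) and multiplied by a b c. *)
Definition curv_ineq (I1 I2 I3 a b c : R) : Prop :=
  c * qnorm I1 a b < a * qnorm I2 b c + b * qnorm I3 c a.

(* Admissible curvatures: the image of R_E under r |-> 1/r (see [R_E_inv]). *)
Definition curv_adm (I1 I2 I3 a b c : R) : Prop :=
  0 < a /\ 0 < b /\ 0 < c /\
  curv_ineq I1 I2 I3 a b c /\ curv_ineq I2 I3 I1 b c a /\ curv_ineq I3 I1 I2 c a b.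

Lemma curv_adm_rot I1 I2 I3 a b c :
  curv_adm I1 I2 I3 a b c -> curv_adm I2 I3 I1 b c a.
Proof. intros [ha [hb [hc [t1 [t2 t3]]]]]; repeat split; assumption. Qed.

(* The quadratic form in the curvatures whose sign is that of the squared
   area of the triangle (see [heron_identity]). *)
Definition heron (I1 I2 I3 a b c : R) : R :=
  (1 - I2 ^ 2) * a ^ 2 + (1 - I3 ^ 2) * b ^ 2 + (1 - I1 ^ 2) * c ^ 2
  + 2 * ((I1 + I2 * I3) * a * b + (I2 + I1 * I3) * b * c + (I3 + I1 * I2) * c * a).

Lemma heron_identity I1 I2 I3 a b c n1 n2 n3 :
  n1 * n1 = qform I1 a b -> n2 * n2 = qform I2 b c -> n3 * n3 = qform I3 c a ->
  ((c * n1) ^ 2 - (a * n2 + b * n3) ^ 2) * ((c * n1) ^ 2 - (a * n2 - b * n3) ^ 2)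
  = - 4 * (a * b * c) ^ 2 * heron I1 I2 I3 a b c.
Proof.
  intros e1 e2 e3.
  replace (((c * n1) ^ 2 - (a * n2 + b * n3) ^ 2) * ((c * n1) ^ 2 - (a * n2 - b * n3) ^ 2))
    with ((c ^ 2 * (n1 * n1) - a ^ 2 * (n2 * n2) - b ^ 2 * (n3 * n3)) ^ 2
          - 4 * a ^ 2 * b ^ 2 * (n2 * n2) * (n3 * n3)) by ring.
  rewrite e1, e2, e3; unfold qform, heron; ring.
Qed.

Lemma curv_adm_iff_heron I1 I2 I3 a b c :
  0 <= I1 -> 0 <= I2 -> 0 <= I3 -> 0 < a -> 0 < b -> 0 < c ->
  curv_adm I1 I2 I3 a b c <-> 0 < heron I1 I2 I3 a b c.
Proof.
  intros h1 h2 h3 ha hb hc.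
  unfold curv_adm, curv_ineq.
  set (n1 := qnorm I1 a b); set (n2 := qnorm I2 b c); set (n3 := qnorm I3 c a).
  assert (0 <= n1 /\ 0 <= n2 /\ 0 <= n3) as [p1 [p2 p3]]
    by (repeat split; apply qnorm_nonneg).
  pose proof (triangle_iff_heron (c * n1) (a * n2) (b * n3)
                ltac:(nra) ltac:(nra) ltac:(nra)) as Htri.
  rewrite (heron_identity I1 I2 I3 a b c n1 n2 n3) in Htri
    by (apply qnorm_sq; lra).
  assert (habc : 0 < (a * b * c) ^ 2)
    by (apply pow_lt; repeat apply Rmult_lt_0_compat; lra).
  split.
  - intros [_ [_ [_ Hineq]]]. apply Htri in Hineq. nra.
  - intros Hh. repeat split; try assumption; apply Htri; nra.
Qed.

Lemma qnorm_ratio_antitone I x c c' : 0 <= I -> 0 <= x -> 0 < c <= c' ->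
  c * qnorm I x c' <= c' * qnorm I x c.
Proof.
  intros hI hx hc.
  pose proof (qnorm_sq I x c hI hx ltac:(lra)) as e.
  pose proof (qnorm_sq I x c' hI hx ltac:(lra)) as e'.
  pose proof (qnorm_nonneg I x c); pose proof (qnorm_nonneg I x c').
  assert (sq : (c * qnorm I x c') * (c * qnorm I x c') <= (c' * qnorm I x c) * (c' * qnorm I x c)).
  { replace ((c * qnorm I x c') * (c * qnorm I x c')) with (c * c * qform I x c')
      by (rewrite <- e'; ring).
    replace ((c' * qnorm I x c) * (c' * qnorm I x c)) with (c' * c' * qform I x c)
      by (rewrite <- e; ring).
    assert (c' * c' * qform I x c - c * c * qform I x c'
            = x ^ 2 * ((c' - c) * (c' + c)) + 2 * (I * x * c * c' * (c' - c)))
      by (unfold qform; ring).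
    assert (0 <= x ^ 2 * ((c' - c) * (c' + c)))
      by (apply Rmult_le_pos; [apply pow2_ge_0 | apply Rmult_le_pos; lra]).
    assert (0 <= I * x * c * c' * (c' - c)) by (repeat apply Rmult_le_pos; lra).
    lra. }
  apply Rsqr_incr_0_var; [exact sq | apply Rmult_le_pos; lra].
Qed.

Lemma curv_ineq_antitone I1 I2 I3 a b c c' :
  0 <= I2 -> 0 <= I3 -> 0 < a -> 0 < b -> 0 < c <= c' ->
  curv_ineq I1 I2 I3 a b c' -> curv_ineq I1 I2 I3 a b c.
Proof.
  unfold curv_ineq; intros h2 h3 ha hb hc H.
  pose proof (qnorm_ratio_antitone I2 b c c' h2 ltac:(lra) hc).
  pose proof (qnorm_ratio_antitone I3 a c c' h3 ltac:(lra) hc).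
  rewrite (qnorm_sym I3 c a), (qnorm_sym I3 c' a) in *.
  assert (c' * (c * qnorm I1 a b) < c' * (a * qnorm I2 b c + b * qnorm I3 a c)) by nra.
  nra.
Qed.

Lemma curv_ineq_small I1 I2 I3 a b c :
  0 <= I1 <= 1 -> 0 <= I2 -> 0 <= I3 -> 0 < a -> 0 < b -> 0 < c ->
  curv_ineq I1 I2 I3 a b c.
Proof.
  intros h1 h2 h3 ha hb hc; unfold curv_ineq.
  pose proof (qnorm_le_sum I1 a b ltac:(lra) ltac:(lra) ltac:(lra)).
  pose proof (qnorm_gt I2 b c h2 hb ltac:(lra)).
  pose proof (qnorm_gt I3 a c h3 ha ltac:(lra)) as h3c.
  rewrite qnorm_sym in h3c.
  nra.
Qed.

(* Completing the square of [heron] in c, the tool for the case I_ij > 1. *)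
Definition disc (I1 I2 I3 : R) : R := I1 ^ 2 + I2 ^ 2 + I3 ^ 2 + 2 * I1 * I2 * I3 - 1.
Definition beta (I1 I2 I3 a b : R) : R := (I2 + I1 * I3) * b + (I3 + I1 * I2) * a.

Lemma heron_complete_square I1 I2 I3 a b c :
  (1 - I1 ^ 2) * heron I1 I2 I3 a b c
  = (beta I1 I2 I3 a b - (I1 ^ 2 - 1) * c) ^ 2 - disc I1 I2 I3 * qform I1 a b.
Proof. unfold heron, beta, disc, qform; ring. Qed.

(* The bound on c, linear plus concave in (a,b), that describes the edge
   inequality when I_ij > 1. *)
Definition c_bound (I1 I2 I3 a b : R) : R :=
  beta I1 I2 I3 a b + sqrt (disc I1 I2 I3) * qnorm I1 a b.

Lemma c_bound_sq I1 I2 I3 a b : 0 <= I1 -> 0 <= disc I1 I2 I3 -> 0 <= a -> 0 <= b ->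
  (c_bound I1 I2 I3 a b - beta I1 I2 I3 a b) ^ 2 = disc I1 I2 I3 * qform I1 a b.
Proof.
  intros h1 hD ha hb. unfold c_bound.
  replace ((beta I1 I2 I3 a b + sqrt (disc I1 I2 I3) * qnorm I1 a b - beta I1 I2 I3 a b) ^ 2)
    with ((sqrt (disc I1 I2 I3) * sqrt (disc I1 I2 I3)) * (qnorm I1 a b * qnorm I1 a b))
    by ring.
  rewrite sqrt_sqrt, qnorm_sq; auto.
Qed.

Lemma curv_adm_bound I1 I2 I3 a b c :
  1 < I1 -> 0 <= I2 -> 0 <= I3 -> curv_adm I1 I2 I3 a b c ->
  0 < disc I1 I2 I3 /\ (I1 ^ 2 - 1) * c < c_bound I1 I2 I3 a b.
Proof.
  intros h1 h2 h3 K.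
  pose proof K as [ha [hb [hc _]]].
  apply curv_adm_iff_heron in K; try lra.
  pose proof (heron_complete_square I1 I2 I3 a b c) as E.
  assert (hQ : 0 < qform I1 a b).
  { assert (0 <= I1 * a * b) by (repeat apply Rmult_le_pos; lra). unfold qform; nra. }
  assert (hk : 0 < I1 ^ 2 - 1) by nra.
  assert ((1 - I1 ^ 2) * heron I1 I2 I3 a b c < 0) by nra.
  assert (hD : 0 < disc I1 I2 I3).
  { destruct (Rlt_or_le 0 (disc I1 I2 I3)) as [h | h]; [exact h |].
    pose proof (pow2_ge_0 (beta I1 I2 I3 a b - (I1 ^ 2 - 1) * c)).
    nra. }
  split; [exact hD |].
  pose proof (c_bound_sq I1 I2 I3 a b ltac:(lra) ltac:(lra) ltac:(lra) ltac:(lra)).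
  assert (0 <= sqrt (disc I1 I2 I3) * qnorm I1 a b)
    by (apply Rmult_le_pos; [apply sqrt_pos | apply qnorm_nonneg]).
  unfold c_bound in *. nra.
Qed.

(* Conversely, for disc > 0 the bound implies the edge inequality: it holds
   where [heron] is positive, and below that region by [curv_ineq_antitone]. *)
Lemma curv_ineq_of_bound I1 I2 I3 a b c :
  1 < I1 -> 0 <= I2 -> 0 <= I3 -> 0 < a -> 0 < b -> 0 < c -> 0 < disc I1 I2 I3 ->
  (I1 ^ 2 - 1) * c < c_bound I1 I2 I3 a b -> curv_ineq I1 I2 I3 a b c.
Proof.
  intros h1 h2 h3 ha hb hc hD Hc.
  set (k := I1 ^ 2 - 1) in *.
  assert (hk : 0 < k) by (unfold k; nra).
  set (bt := beta I1 I2 I3 a b).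
  set (s := sqrt (disc I1 I2 I3) * qnorm I1 a b).
  assert (hs : 0 < s).
  { apply Rmult_lt_0_compat; [apply sqrt_lt_R0; exact hD |].
    pose proof (qnorm_gt I1 b a ltac:(lra) hb ltac:(lra)) as hn.
    rewrite qnorm_sym in hn. lra. }
  pose proof (c_bound_sq I1 I2 I3 a b ltac:(lra) ltac:(lra) ltac:(lra) ltac:(lra)) as Es.
  unfold c_bound in Hc, Es. fold bt s in Hc, Es.
  replace (bt + s - bt) with s in Es by ring.
  assert (from_above : forall c', c <= c' -> bt <= k * c' < bt + s ->
                              curv_ineq I1 I2 I3 a b c).
  { intros c' hcc' hc'.
    assert (K' : curv_adm I1 I2 I3 a b c').
    { apply curv_adm_iff_heron; try lra.
      pose proof (heron_complete_square I1 I2 I3 a b c') as E. fold k bt in E.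
      assert ((bt - k * c') ^ 2 < s ^ 2) by nra.
      assert ((1 - I1 ^ 2) * heron I1 I2 I3 a b c' < 0) by lra.
      unfold k in hk; nra. }
    apply (curv_ineq_antitone I1 I2 I3 a b c c'); try lra. apply K'. }
  destruct (Rle_or_lt bt (k * c)) as [hb_le | hb_gt].
  - apply (from_above c); lra.
  - apply (from_above (bt / k)).
    + apply (Rmult_le_reg_l k); [exact hk |]. field_simplify; lra.
    + replace (k * (bt / k)) with bt by (field; lra). lra.
Qed.

(* Each edge inequality holds along segments of admissible curvatures: for
   I_ij <= 1 trivially, and for I_ij > 1 because the admissible set lies
   below the graph of the concave function [c_bound]. *)
Lemma curv_ineq_convex I1 I2 I3 a b c a' b' c' t :
  0 <= I1 -> 0 <= I2 -> 0 <= I3 ->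
  curv_adm I1 I2 I3 a b c -> curv_adm I1 I2 I3 a' b' c' -> 0 <= t <= 1 ->
  curv_ineq I1 I2 I3 ((1 - t) * a + t * a') ((1 - t) * b + t * b') ((1 - t) * c + t * c').
Proof.
  intros h1 h2 h3 K K' ht.
  pose proof K as [ha [hb [hc _]]]; pose proof K' as [ha' [hb' [hc' _]]].
  destruct (Rle_or_lt I1 1) as [hI | hI].
  { apply curv_ineq_small; try lra; nra. }
  destruct (curv_adm_bound I1 I2 I3 a b c hI h2 h3 K) as [hD B].
  destruct (curv_adm_bound I1 I2 I3 a' b' c' hI h2 h3 K') as [_ B'].
  apply curv_ineq_of_bound; try lra; try nra.
  assert (concave : (1 - t) * c_bound I1 I2 I3 a b + t * c_bound I1 I2 I3 a' b'
                    <= c_bound I1 I2 I3 ((1 - t) * a + t * a') ((1 - t) * b + t * b')).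
  { unfold c_bound.
    pose proof (qnorm_concave I1 a b a' b' t ltac:(lra) ltac:(lra) ltac:(lra)
                  ltac:(lra) ltac:(lra) ht).
    pose proof (sqrt_pos (disc I1 I2 I3)).
    unfold beta; nra. }
  assert ((1 - t) * ((I1 ^ 2 - 1) * c) + t * ((I1 ^ 2 - 1) * c')
          < (1 - t) * c_bound I1 I2 I3 a b + t * c_bound I1 I2 I3 a' b').
  { destruct (Req_dec t 0) as [-> | ht0]; [lra |].
    assert (t * ((I1 ^ 2 - 1) * c') < t * c_bound I1 I2 I3 a' b')
      by (apply Rmult_lt_compat_l; lra).
    assert (0 <= 1 - t) by lra. nra. }
  nra.
Qed.

Lemma curv_adm_convex I1 I2 I3 a b c a' b' c' t :
  0 <= I1 -> 0 <= I2 -> 0 <= I3 ->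
  curv_adm I1 I2 I3 a b c -> curv_adm I1 I2 I3 a' b' c' -> 0 <= t <= 1 ->
  curv_adm I1 I2 I3 ((1 - t) * a + t * a') ((1 - t) * b + t * b') ((1 - t) * c + t * c').
Proof.
  intros h1 h2 h3 K K' ht.
  pose proof K as [ha [hb [hc _]]]; pose proof K' as [ha' [hb' [hc' _]]].
  repeat split; try nra.
  - apply curv_ineq_convex; assumption.
  - apply (curv_ineq_convex I2 I3 I1 b c a b' c' a'); try apply curv_adm_rot; assumption.
  - apply (curv_ineq_convex I3 I1 I2 c a b c' a' b'); try (do 2 apply curv_adm_rot); assumption.
Qed.

Lemma edge_len_inv I a b : 0 <= I -> 0 < a -> 0 < b ->
  edge_len I (/ a) (/ b) = qnorm I a b / (a * b).
Proof.
  intros hI ha hb. unfold edge_len, qnorm.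
  replace ((/ a) ^ 2 + (/ b) ^ 2 + 2 * I * / a * / b)
    with (qform I a b * (/ (a * b) * / (a * b))) by (unfold qform; field; lra).
  rewrite sqrt_mult_alt by (apply qform_nonneg; lra).
  rewrite sqrt_square; [reflexivity |].
  left; apply Rinv_0_lt_compat; nra.
Qed.

Lemma clear_denominators a b c X Y Z : 0 < a -> 0 < b -> 0 < c ->
  X / (a * b) < Y / (b * c) + Z / (c * a) <-> c * X < a * Y + b * Z.
Proof.
  intros ha hb hc.
  assert (habc : 0 < a * b * c) by (repeat apply Rmult_lt_0_compat; lra).
  assert (E : Y / (b * c) + Z / (c * a) - X / (a * b) = (a * Y + b * Z - c * X) / (a * b * c))
    by (field; lra).
  split; intro H.
  - assert (0 < (a * Y + b * Z - c * X) / (a * b * c)) by lra.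
    assert (0 < a * Y + b * Z - c * X).
    { replace (a * Y + b * Z - c * X)
        with ((a * Y + b * Z - c * X) / (a * b * c) * (a * b * c)) by (field; lra).
      apply Rmult_lt_0_compat; assumption. }
    lra.
  - assert (0 < (a * Y + b * Z - c * X) / (a * b * c)) by (apply Rdiv_lt_0_compat; lra).
    lra.
Qed.

Lemma R_E_inv I1 I2 I3 a b c :
  0 <= I1 -> 0 <= I2 -> 0 <= I3 -> 0 < a -> 0 < b -> 0 < c ->
  R_E I1 I2 I3 (/ a, / b, / c) <-> curv_adm I1 I2 I3 a b c.
Proof.
  intros h1 h2 h3 ha hb hc. unfold R_E, curv_adm, curv_ineq. cbv beta iota zeta.
  rewrite (edge_len_inv I1 a b), (edge_len_inv I2 b c), (edge_len_inv I3 c a) by lra.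
  rewrite (clear_denominators a b c), (clear_denominators b c a),
          (clear_denominators c a b) by lra.
  assert (0 < / a /\ 0 < / b /\ 0 < / c) as [hia [hib hic]]
    by (repeat split; apply Rinv_0_lt_compat; lra).
  split; intros [_ [_ [_ Hineq]]]; repeat split; try apply Hineq; assumption.
Qed.

Lemma U_E_curv I1 I2 I3 x y z : 0 <= I1 -> 0 <= I2 -> 0 <= I3 ->
  U_E I1 I2 I3 (x, y, z) <-> curv_adm I1 I2 I3 (exp (- x)) (exp (- y)) (exp (- z)).
Proof.
  intros h1 h2 h3. unfold U_E.
  rewrite <- (R_E_inv I1 I2 I3) by (assumption || apply exp_pos).
  rewrite !exp_Ropp, !Rinv_inv. reflexivity.
Qed.

(* The path from log-radius x to y which is a straight segment in curvature. *)
Definition lseg (x y s : R) : R := - ln ((1 - s) * exp (- x) + s * exp (- y)).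

Lemma exp_lseg x y s : 0 <= s <= 1 ->
  exp (- lseg x y s) = (1 - s) * exp (- x) + s * exp (- y).
Proof.
  intros hs. unfold lseg. rewrite Ropp_involutive. apply exp_ln.
  pose proof (exp_pos (- x)); pose proof (exp_pos (- y)). nra.
Qed.

Lemma lseg_same x s : lseg x x s = x.
Proof.
  unfold lseg.
  replace ((1 - s) * exp (- x) + s * exp (- x)) with (exp (- x)) by ring.
  rewrite ln_exp; ring.
Qed.

Lemma lseg_0 x y : lseg x y 0 = x.
Proof.
  unfold lseg. replace ((1 - 0) * exp (- x) + 0 * exp (- y)) with (exp (- x)) by ring.
  rewrite ln_exp; ring.
Qed.

Lemma lseg_1 x y : lseg x y 1 = y.
Proof.
  unfold lseg. replace ((1 - 1) * exp (- x) + 1 * exp (- y)) with (exp (- y)) by ring.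
  rewrite ln_exp; ring.
Qed.

Definition p1 (p : pt3) : R := fst (fst p).
Definition p2 (p : pt3) : R := snd (fst p).
Definition p3 (p : pt3) : R := snd p.

Lemma pt3_eta (p : pt3) : (p1 p, p2 p, p3 p) = p.
Proof. destruct p as [[x y] z]; reflexivity. Qed.

Definition useg (p q : pt3) (s : R) : pt3 :=
  (lseg (p1 p) (p1 q) s, lseg (p2 p) (p2 q) s, lseg (p3 p) (p3 q) s).

Lemma useg_0 p q : useg p q 0 = p.
Proof. unfold useg; rewrite !lseg_0; apply pt3_eta. Qed.

Lemma useg_1 p q : useg p q 1 = q.
Proof. unfold useg; rewrite !lseg_1; apply pt3_eta. Qed.

Lemma useg_same p s : useg p p s = p.
Proof. unfold useg; rewrite !lseg_same; apply pt3_eta. Qed.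

(* By convexity of the admissible curvatures, U_E contains these paths. *)
Lemma useg_in I1 I2 I3 p q s : 0 <= I1 -> 0 <= I2 -> 0 <= I3 ->
  U_E I1 I2 I3 p -> U_E I1 I2 I3 q -> I01 s -> U_E I1 I2 I3 (useg p q s).
Proof.
  intros h1 h2 h3 Hp Hq hs. unfold I01 in hs.
  destruct p as [[x y] z], q as [[x' y'] z'].
  unfold useg, p1, p2, p3; simpl.
  apply U_E_curv in Hp, Hq; try assumption. apply U_E_curv; try assumption.
  rewrite !exp_lseg by exact hs.
  apply curv_adm_convex; assumption.
Qed.

Definition cts {X : Type} (d : X -> X -> R) (D : X -> Prop) (f : X -> R) : Prop :=
  forall x, D x -> forall eps, 0 < eps -> exists delta, 0 < delta /\
    forall y, D y -> d x y < delta -> Rabs (f x - f y) < eps.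

Definition dR (x y : R) : R := Rabs (x - y).

Section Continuity.
Context {X : Type} (d : X -> X -> R) (D : X -> Prop).

Lemma cts_const (c : R) : cts d D (fun _ => c).
Proof.
  intros x _ eps he. exists 1; split; [lra |].
  intros; rewrite Rminus_diag, Rabs_R0; exact he.
Qed.

Lemma cts_plus (f g : X -> R) : cts d D f -> cts d D g -> cts d D (fun x => f x + g x).
Proof.
  intros Hf Hg x Dx eps he.
  destruct (Hf x Dx (eps / 2) ltac:(lra)) as [d1 [hd1 H1]].
  destruct (Hg x Dx (eps / 2) ltac:(lra)) as [d2 [hd2 H2]].
  exists (Rmin d1 d2); split; [apply Rmin_pos; lra |]. intros y Dy hy.
  pose proof (Rmin_l d1 d2); pose proof (Rmin_r d1 d2).
  specialize (H1 y Dy ltac:(lra)); specialize (H2 y Dy ltac:(lra)).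
  replace (f x + g x - (f y + g y)) with ((f x - f y) + (g x - g y)) by ring.
  pose proof (Rabs_triang (f x - f y) (g x - g y)). lra.
Qed.

Lemma cts_opp (f : X -> R) : cts d D f -> cts d D (fun x => - f x).
Proof.
  intros Hf x Dx eps he. destruct (Hf x Dx eps he) as [d1 [hd1 H1]].
  exists d1; split; [exact hd1 |]. intros y Dy hy.
  replace (- f x - - f y) with (- (f x - f y)) by ring.
  rewrite Rabs_Ropp; auto.
Qed.

Lemma cts_mult (f g : X -> R) : cts d D f -> cts d D g -> cts d D (fun x => f x * g x).
Proof.
  intros Hf Hg x Dx eps he.
  set (M := Rabs (f x) + Rabs (g x) + 1).
  assert (hM : 1 <= M) by (unfold M; pose proof (Rabs_pos (f x)); pose proof (Rabs_pos (g x)); lra).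
  set (e := Rmin 1 (eps / (2 * M))).
  assert (he0 : 0 < e) by (apply Rmin_pos; [lra | apply Rdiv_lt_0_compat; lra]).
  assert (he1 : e <= 1) by apply Rmin_l.
  assert (heM : e * (2 * M) <= eps).
  { assert (he2 : e <= eps / (2 * M)) by apply Rmin_r.
    apply (Rmult_le_compat_r (2 * M)) in he2; [| lra].
    unfold Rdiv in he2. rewrite Rmult_assoc, Rinv_l, Rmult_1_r in he2; lra. }
  destruct (Hf x Dx e he0) as [d1 [hd1 H1]].
  destruct (Hg x Dx e he0) as [d2 [hd2 H2]].
  exists (Rmin d1 d2); split; [apply Rmin_pos; lra |]. intros y Dy hy.
  pose proof (Rmin_l d1 d2); pose proof (Rmin_r d1 d2).
  specialize (H1 y Dy ltac:(lra)); specialize (H2 y Dy ltac:(lra)).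
  replace (f x * g x - f y * g y) with (f x * (g x - g y) + g y * (f x - f y)) by ring.
  pose proof (Rabs_triang (f x * (g x - g y)) (g y * (f x - f y))) as T.
  rewrite !Rabs_mult in T.
  assert (hgy : Rabs (g y) <= Rabs (g x) + 1).
  { replace (g y) with (g x - (g x - g y)) by ring.
    pose proof (Rabs_triang (g x) (- (g x - g y))) as T'. rewrite Rabs_Ropp in T'.
    unfold Rminus at 1. lra. }
  pose proof (Rabs_pos (f x)); pose proof (Rabs_pos (g y)).
  pose proof (Rabs_pos (g x - g y)); pose proof (Rabs_pos (f x - f y)).
  assert (Rabs (f x) * Rabs (g x - g y) <= Rabs (f x) * e) by (apply Rmult_le_compat_l; lra).
  assert (Rabs (g y) * Rabs (f x - f y) <= (Rabs (g x) + 1) * e) by (apply Rmult_le_compat; lra).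
  unfold M in heM. nra.
Qed.

Lemma cts_comp (P : R -> Prop) (h : R -> R) (f : X -> R) :
  cts dR P h -> (forall x, D x -> P (f x)) -> cts d D f -> cts d D (fun x => h (f x)).
Proof.
  intros Hh HP Hf x Dx eps he.
  destruct (Hh (f x) (HP x Dx) eps he) as [d1 [hd1 H1]].
  destruct (Hf x Dx d1 hd1) as [d2 [hd2 H2]].
  exists d2; split; [exact hd2 |]. intros y Dy hy.
  apply H1; [apply HP; exact Dy | apply H2; assumption].
Qed.

Lemma cts_lip {Y : Type} (dY : Y -> Y -> R) (DY : Y -> Prop) (phi : X -> Y) (f : Y -> R) :
  (forall x, D x -> DY (phi x)) -> (forall x y, dY (phi x) (phi y) <= d x y) ->
  cts dY DY f -> cts d D (fun x => f (phi x)).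
Proof.
  intros HD Hd Hf x Dx eps he.
  destruct (Hf (phi x) (HD x Dx) eps he) as [d1 [hd1 H1]].
  exists d1; split; [exact hd1 |]. intros y Dy hy.
  apply H1; [auto |]. specialize (Hd x y). lra.
Qed.

End Continuity.

Lemma cts_id (D : R -> Prop) : cts dR D (fun x => x).
Proof. intros x _ eps he. exists eps; split; auto. Qed.

Lemma cts_of_continuity_pt (P : R -> Prop) (h : R -> R) :
  (forall y, P y -> continuity_pt h y) -> cts dR P h.
Proof.
  intros H y Py eps he.
  destruct (H y Py eps he) as [alp [ha Ha]].
  exists alp; split; [exact ha |]. intros y' _ hy'. unfold dR in *.
  destruct (Req_dec y y') as [<- | ne].
  - rewrite Rminus_diag, Rabs_R0; lra.
  - rewrite Rabs_minus_sym. apply (Ha y'). split.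
    + split; [exact I | exact ne].
    + simpl; unfold Rdist; rewrite Rabs_minus_sym; exact hy'.
Qed.

Lemma cts_exp : cts dR (fun _ => True) exp.
Proof.
  apply cts_of_continuity_pt; intros y _.
  apply derivable_continuous_pt, derivable_pt_exp.
Qed.

Lemma cts_ln : cts dR (fun x => 0 < x) ln.
Proof.
  apply cts_of_continuity_pt; intros y hy.
  apply derivable_continuous_pt. exists (/ y). apply derivable_pt_lim_ln; exact hy.
Qed.

Lemma cts_sqrt : cts dR (fun x => 0 < x) sqrt.
Proof. apply cts_of_continuity_pt; intros y hy; apply sqrt_continuity_pt; exact hy. Qed.

Lemma abs_le_norm3 a b c : Rabs a <= sqrt (a ^ 2 + b ^ 2 + c ^ 2).
Proof.
  rewrite <- sqrt_Rsqr_abs. apply sqrt_le_1_alt. unfold Rsqr.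
  pose proof (pow2_ge_0 b); pose proof (pow2_ge_0 c). simpl; lra.
Qed.

Lemma dist3_p1 p q : dR (p1 p) (p1 q) <= dist3 p q.
Proof. destruct p as [[x y] z], q as [[x' y'] z']. apply abs_le_norm3. Qed.

Lemma dist3_p2 p q : dR (p2 p) (p2 q) <= dist3 p q.
Proof.
  destruct p as [[x y] z], q as [[x' y'] z']. unfold dist3; cbv beta iota.
  replace ((x - x') ^ 2 + (y - y') ^ 2 + (z - z') ^ 2)
    with ((y - y') ^ 2 + (x - x') ^ 2 + (z - z') ^ 2) by ring.
  apply abs_le_norm3.
Qed.

Lemma dist3_p3 p q : dR (p3 p) (p3 q) <= dist3 p q.
Proof.
  destruct p as [[x y] z], q as [[x' y'] z']. unfold dist3; cbv beta iota.
  replace ((x - x') ^ 2 + (y - y') ^ 2 + (z - z') ^ 2)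
    with ((z - z') ^ 2 + (x - x') ^ 2 + (y - y') ^ 2) by ring.
  apply abs_le_norm3.
Qed.

Lemma dist3_le_l1 a b c a' b' c' :
  dist3 (a, b, c) (a', b', c') <= dR a a' + dR b b' + dR c c'.
Proof.
  unfold dist3, dR. pose proof (Rabs_pos (a - a')); pose proof (Rabs_pos (b - b')).
  pose proof (Rabs_pos (c - c')).
  apply Rsqr_incr_0_var; [| lra].
  rewrite Rsqr_sqrt by (pose proof (pow2_ge_0 (a - a')); pose proof (pow2_ge_0 (b - b'));
                        pose proof (pow2_ge_0 (c - c')); lra).
  unfold Rsqr.
  assert (forall r, r ^ 2 = Rabs r * Rabs r) as sq_abs
    by (intro r; rewrite <- Rabs_mult, Rabs_right by nra; ring).
  rewrite !(sq_abs (_ - _)). nra.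
Qed.

Lemma cts_triple {X : Type} (d : X -> X -> R) (D : X -> Prop) (f1 f2 f3 : X -> R) :
  cts d D f1 -> cts d D f2 -> cts d D f3 ->
  forall x, D x -> forall eps, 0 < eps -> exists delta, 0 < delta /\
    forall y, D y -> d x y < delta -> dist3 (f1 x, f2 x, f3 x) (f1 y, f2 y, f3 y) < eps.
Proof.
  intros H1 H2 H3 x Dx eps he.
  destruct (H1 x Dx (eps / 3) ltac:(lra)) as [d1 [hd1 K1]].
  destruct (H2 x Dx (eps / 3) ltac:(lra)) as [d2 [hd2 K2]].
  destruct (H3 x Dx (eps / 3) ltac:(lra)) as [d3 [hd3 K3]].
  exists (Rmin d1 (Rmin d2 d3)); split; [repeat apply Rmin_pos; lra |].
  intros y Dy hy.
  pose proof (Rmin_l d1 (Rmin d2 d3)); pose proof (Rmin_r d1 (Rmin d2 d3)).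
  pose proof (Rmin_l d2 d3); pose proof (Rmin_r d2 d3).
  specialize (K1 y Dy ltac:(lra)); specialize (K2 y Dy ltac:(lra));
    specialize (K3 y Dy ltac:(lra)).
  pose proof (dist3_le_l1 (f1 x) (f2 x) (f3 x) (f1 y) (f2 y) (f3 y)).
  unfold dR in *. lra.
Qed.

Lemma path_cont_of (f1 f2 f3 : R -> R) :
  cts dR I01 f1 -> cts dR I01 f2 -> cts dR I01 f3 ->
  path_cont (fun t => (f1 t, f2 t, f3 t)).
Proof. intros H1 H2 H3 t Dt. exact (cts_triple dR I01 f1 f2 f3 H1 H2 H3 t Dt). Qed.

Definition dsq (a b : R * R) : R := sqrt ((fst a - fst b) ^ 2 + (snd a - snd b) ^ 2).
Definition Isq (a : R * R) : Prop := I01 (fst a) /\ I01 (snd a).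

Lemma square_cont_of (f1 f2 f3 : R * R -> R) :
  cts dsq Isq f1 -> cts dsq Isq f2 -> cts dsq Isq f3 ->
  square_cont (fun s t => (f1 (s, t), f2 (s, t), f3 (s, t))).
Proof.
  intros H1 H2 H3 s t Ds Dt eps he.
  destruct (cts_triple dsq Isq f1 f2 f3 H1 H2 H3 (s, t) (conj Ds Dt) eps he) as [del [hd K]].
  exists del; split; [exact hd |]. intros s' t' Ds' Dt' hst.
  apply (K (s', t')); [split; assumption | exact hst].
Qed.

Lemma dsq_fst a b : dR (fst a) (fst b) <= dsq a b.
Proof.
  unfold dR, dsq. rewrite <- sqrt_Rsqr_abs. apply sqrt_le_1_alt. unfold Rsqr.
  pose proof (pow2_ge_0 (snd a - snd b)). simpl; lra.
Qed.

Lemma dsq_snd a b : dR (snd a) (snd b) <= dsq a b.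
Proof.
  unfold dR, dsq. rewrite <- sqrt_Rsqr_abs. apply sqrt_le_1_alt. unfold Rsqr.
  pose proof (pow2_ge_0 (fst a - fst b)). simpl; lra.
Qed.

Lemma path_coord (g : R -> pt3) (pi : pt3 -> R) :
  (forall p q, dR (pi p) (pi q) <= dist3 p q) -> path_cont g -> cts dR I01 (fun t => pi (g t)).
Proof.
  intros Hp Hg t Dt eps he. destruct (Hg t Dt eps he) as [del [hd K]].
  exists del; split; [exact hd |]. intros t' Dt' ht.
  specialize (K t' Dt' ht); specialize (Hp (g t) (g t')). unfold dR in Hp. lra.
Qed.

Lemma cts_lseg {X : Type} (d : X -> X -> R) (D : X -> Prop) (al be sg : X -> R) :
  cts d D al -> cts d D be -> cts d D sg -> (forall x, D x -> 0 <= sg x <= 1) ->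
  cts d D (fun x => lseg (al x) (be x) (sg x)).
Proof.
  intros Ha Hb Hs Hs01. unfold lseg.
  apply cts_opp.
  apply (cts_comp d D (fun y => 0 < y) ln); [exact cts_ln | |].
  { intros x Dx. specialize (Hs01 x Dx).
    pose proof (exp_pos (- al x)); pose proof (exp_pos (- be x)). nra. }
  assert (Hexp : forall f : X -> R, cts d D f -> cts d D (fun x => exp (- f x))).
  { intros f Hf. apply (cts_comp d D (fun _ => True) exp); [exact cts_exp | auto |].
    apply cts_opp; exact Hf. }
  apply cts_plus; apply cts_mult; auto.
  apply cts_plus; [apply cts_const | apply cts_opp; exact Hs].
Qed.

Lemma path_cont_useg (p q : pt3) : path_cont (useg p q).
Proof.
  apply path_cont_of; apply cts_lseg; try apply cts_const; try apply cts_id; auto.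
Qed.

Lemma square_cont_useg (g : R -> pt3) (q : pt3) :
  path_cont g -> square_cont (fun s t => useg (g t) q s).
Proof.
  intros Hg.
  assert (Hfst : cts dsq Isq (fun st => fst st)).
  { apply (cts_lip dsq Isq dR I01 fst (fun x => x)); [intros x [h _]; exact h | apply dsq_fst |].
    apply cts_id. }
  assert (Hcoord : forall pi : pt3 -> R, (forall p q, dR (pi p) (pi q) <= dist3 p q) ->
                   cts dsq Isq (fun st => pi (g (snd st)))).
  { intros pi Hp. apply (cts_lip dsq Isq dR I01 snd (fun t => pi (g t)));
      [intros x [_ h]; exact h | apply dsq_snd | apply path_coord; assumption]. }
  apply (square_cont_of (fun st => lseg (p1 (g (snd st))) (p1 q) (fst st))
                        (fun st => lseg (p2 (g (snd st))) (p2 q) (fst st))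
                        (fun st => lseg (p3 (g (snd st))) (p3 q) (fst st)));
    apply cts_lseg; try apply cts_const; try exact Hfst; try (intros x [h _]; exact h);
    apply Hcoord; [apply dist3_p1 | apply dist3_p2 | apply dist3_p3].
Qed.

Lemma open3_pos (F : pt3 -> R) :
  cts dist3 (fun _ => True) F -> open3 (fun p => 0 < F p).
Proof.
  intros HF p Hp. destruct (HF p I (F p) Hp) as [del [hd K]].
  exists del; split; [exact hd |]. intros q hq.
  specialize (K q I hq). apply Rabs_def2 in K. lra.
Qed.

Lemma open3_and (A B : pt3 -> Prop) : open3 A -> open3 B -> open3 (fun p => A p /\ B p).
Proof.
  intros oA oB p [Ap Bp].
  destruct (oA p Ap) as [e1 [he1 K1]]; destruct (oB p Bp) as [e2 [he2 K2]].
  exists (Rmin e1 e2); split; [apply Rmin_pos; assumption |].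
  intros q hq. pose proof (Rmin_l e1 e2); pose proof (Rmin_r e1 e2).
  split; [apply K1 | apply K2]; lra.
Qed.

Lemma open3_ext (A B : pt3 -> Prop) : (forall p, A p <-> B p) -> open3 A -> open3 B.
Proof.
  intros E oA p Bp. apply E in Bp. destruct (oA p Bp) as [e [he K]].
  exists e; split; [exact he |]. intros q hq; apply E, K, hq.
Qed.

Definition elen (I : R) (pi pi' : pt3 -> R) (u : pt3) : R :=
  edge_len I (exp (pi u)) (exp (pi' u)).

Lemma cts_elen I pi pi' : 0 <= I ->
  (forall p q, dR (pi p) (pi q) <= dist3 p q) ->
  (forall p q, dR (pi' p) (pi' q) <= dist3 p q) ->
  cts dist3 (fun _ => True) (elen I pi pi').
Proof.
  intros hI H1 H2.
  assert (Hexp : forall pi0 : pt3 -> R, (forall p q, dR (pi0 p) (pi0 q) <= dist3 p q) ->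
                 cts dist3 (fun _ => True) (fun u => exp (pi0 u))).
  { intros pi0 Hp. apply (cts_comp dist3 _ (fun _ => True) exp); [exact cts_exp | auto |].
    apply (cts_lip dist3 _ dR (fun _ => True) pi0 (fun x => x)); auto. apply cts_id. }
  unfold elen, edge_len.
  apply (cts_comp dist3 _ (fun y => 0 < y) sqrt); [exact cts_sqrt | |].
  - intros u _. pose proof (exp_pos (pi u)); pose proof (exp_pos (pi' u)).
    assert (0 <= I * exp (pi u) * exp (pi' u)) by (repeat apply Rmult_le_pos; lra). nra.
  - change (cts dist3 (fun _ => True)
      (fun u => exp (pi u) * (exp (pi u) * 1) + exp (pi' u) * (exp (pi' u) * 1)
                + 2 * I * exp (pi u) * exp (pi' u))).
    repeat (apply cts_plus || apply cts_mult); try apply cts_const; auto.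
Qed.

(* U_E is cut out by three strict inequalities between continuous functions. *)
Lemma U_E_open I1 I2 I3 : 0 <= I1 -> 0 <= I2 -> 0 <= I3 -> open3 (U_E I1 I2 I3).
Proof.
  intros h1 h2 h3.
  set (L1 := elen I1 p1 p2); set (L2 := elen I2 p2 p3); set (L3 := elen I3 p3 p1).
  assert (C1 : cts dist3 (fun _ => True) L1) by (apply cts_elen; auto using dist3_p1, dist3_p2).
  assert (C2 : cts dist3 (fun _ => True) L2) by (apply cts_elen; auto using dist3_p2, dist3_p3).
  assert (C3 : cts dist3 (fun _ => True) L3) by (apply cts_elen; auto using dist3_p3, dist3_p1).
  apply (open3_ext (fun u => 0 < L2 u + L3 u - L1 u /\
                             (0 < L3 u + L1 u - L2 u /\ 0 < L1 u + L2 u - L3 u))).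
  - intros [[x y] z]. unfold U_E, R_E, L1, L2, L3, elen, p1, p2, p3; simpl.
    pose proof (exp_pos x); pose proof (exp_pos y); pose proof (exp_pos z).
    split; [intros [? [? ?]]; repeat split; lra | intros [_ [_ [_ [? [? ?]]]]]; lra].
  - repeat apply open3_and; apply open3_pos;
      repeat (apply cts_plus || apply cts_opp); assumption.
Qed.

Lemma path_stays (g : R -> pt3) (O : pt3 -> Prop) (t : R) :
  path_cont g -> open3 O -> I01 t -> O (g t) ->
  exists del, 0 < del /\ forall t', I01 t' -> Rabs (t - t') < del -> O (g t').
Proof.
  intros gc oO ht Ot. destruct (oO _ Ot) as [eps [he K]].
  destruct (gc t ht eps he) as [del [hd Hd]].
  exists del; split; [exact hd |]. intros t' ht' htt'. apply K, Hd; assumption.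
Qed.

(* A path-connected set is connected: on a path from a point of A to a point
   of B, let tau be the supremum of the times up to which the path stays in
   A; openness of A and B shows g tau can lie in neither. *)
Lemma connected_of_path_connected (U : pt3 -> Prop) : path_connected3 U -> connected3 U.
Proof.
  intros HP [A [B [oA [oB [cov [[p [Up Ap]] [[q [Uq Bq]] disj]]]]]]].
  destruct (HP p q Up Uq) as [g [gc [gU [g0 g1]]]].
  set (E := fun t => I01 t /\ forall t', 0 <= t' <= t -> A (g t')).
  assert (E0 : E 0).
  { split; [unfold I01; lra |]. intros t' ht'. replace t' with 0 by lra. rewrite g0; exact Ap. }
  assert (Eb : bound E) by (exists 1; intros x [hx _]; unfold I01 in hx; lra).
  destruct (completeness E Eb (ex_intro _ 0 E0)) as [tau [tub tlub]].
  assert (htau : I01 tau) by (split; [apply tub, E0 | apply tlub; intros x [hx _]; apply hx]).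
  assert (below : forall t', 0 <= t' < tau -> A (g t')).
  { intros t' ht'. apply NNPP; intro nA.
    assert (ub : is_upper_bound E t').
    { intros x [_ Ex]. destruct (Rle_or_lt x t') as [h | h]; [exact h |].
      exfalso; apply nA, Ex; lra. }
    pose proof (tlub t' ub). lra. }
  unfold I01 in htau.
  destruct (cov _ (gU tau htau)) as [At | Bt].
  - destruct (path_stays g A tau gc oA htau At) as [del [hd K]].
    destruct (Rlt_or_le tau 1) as [hlt | hge].
    + set (tau' := Rmin 1 (tau + del / 2)).
      assert (tau < tau') by (apply Rmin_glb_lt; lra).
      assert (tau' <= tau + del / 2) by apply Rmin_r.
      assert (tau' <= 1) by apply Rmin_l.
      assert (Etau' : E tau').
      { split; [unfold I01; lra |]. intros t' ht'.
        destruct (Rlt_or_le t' tau); [apply below; lra |].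
        apply K; [unfold I01; lra | rewrite Rabs_left1; lra]. }
      pose proof (tub tau' Etau'). lra.
    + replace tau with 1 in At by lra. rewrite g1 in At. exact (disj q Uq At Bq).
  - destruct (path_stays g B tau gc oB htau Bt) as [del [hd K]].
    destruct (Rle_or_lt tau 0) as [hle | hgt].
    + replace tau with 0 in Bt by lra. rewrite g0 in Bt. exact (disj p Up Ap Bt).
    + set (t' := Rmax 0 (tau - del / 2)).
      assert (0 <= t') by apply Rmax_l.
      assert (t' < tau) by (apply Rmax_lub_lt; lra).
      assert (tau - del / 2 <= t') by apply Rmax_r.
      apply (disj (g t')); [apply gU; unfold I01; lra | apply below; lra |].
      apply K; [unfold I01; lra | rewrite Rabs_right; lra].
Qed.

Lemma U_E_path_connected I1 I2 I3 : 0 <= I1 -> 0 <= I2 -> 0 <= I3 ->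
  path_connected3 (U_E I1 I2 I3).
Proof.
  intros h1 h2 h3 p q Hp Hq. exists (useg p q).
  split; [apply path_cont_useg |].
  split; [intros t ht; apply useg_in; assumption |].
  split; [apply useg_0 | apply useg_1].
Qed.

Theorem corollary2p2 (Iij Ijk Iki : R)
  (hij : 0 <= Iij) (hjk : 0 <= Ijk) (hki : 0 <= Iki) :
  connected3 (U_E Iij Ijk Iki) /\
  simply_connected3 (U_E Iij Ijk Iki) /\
  open3 (U_E Iij Ijk Iki).
Proof.
  pose proof (U_E_path_connected Iij Ijk Iki hij hjk hki) as Hpc.
  split; [apply connected_of_path_connected, Hpc |].
  split; [| apply U_E_open; assumption].
  split; [exact Hpc |].
  intros g gc gU gloop.
  exists (fun s t => useg (g t) (g 0) s).
  split; [apply square_cont_useg, gc |].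
  split.
  { intros s t hs ht. apply useg_in; try assumption; apply gU; [exact ht |].
    unfold I01; lra. }
  split; [intros t _; apply useg_0 |].
  split; [intros t _; apply useg_1 |].
  intros s _; split; [| rewrite <- gloop]; apply useg_same.
Qed.
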